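(* In the static load balancing game described in the context, suppose that initially each player $i$ uses an action $a_i^0$ with $a_{ij}^0\neq 0$ for all $i\in[n]$, $j\in[m]$. Suppose the players update their actions sequentially, each player exactly once and in any order, each time replacing its action by its (unique) best response to the current actions of the other players, i.e., by the minimizer of $D_i(\cdot,a_{-i})$ over the simplex $A_i$. Then the resulting action profile is a pure Nash equilibrium. In other words, the best-response dynamics converge to a pure Nash equilibrium in $n$ iterations.
   Context: Static load balancing game: there are $m$ servers $[m]$ with service rates $\mu_j>0$ and initial loads $s_j^0\ge 0$, and $n$ players $[n]$; player $i$ holds a job of length $\lambda_i>0$. Player $i$'s action set is $A_i=\{a_i=(a_{i1},\dots,a_{im}):\sum_j a_{ij}=1,\ a_{ij}\ge0\}$, $a_{ij}$ being the fraction of job $i$ placed on server $j$. The cost of player $i$ under profile $a$ is $$D_i(a)=\sum_{j=1}^m \lambda_i a_{ij}\left(\frac{\lambda_i a_{ij}}{2\mu_j}+\frac{s_j^0+\sum_{k\neq i}\lambda_k a_{kj}}{\mu_j}\right),$$ which is strongly convex in $a_i$. A pure Nash equilibrium is a profile $a$ with $D_i(a_i,a_{-i})\le D_i(a_i',a_{-i})$ for all $i$ and $a_i'\in A_i$. *)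

(* R : realType, players 'I_n, servers 'I_m. *)
From mathcomp Require Import all_boot all_order all_algebra all_fingroup.
From mathcomp Require Import reals.
Set Implicit Arguments. Unset Strict Implicit. Unset Printing Implicit Defensive.
Import Order.TTheory GRing.Theory Num.Theory.
Local Open Scope ring_scope.

Section LB.
Variables (R : realType) (n m : nat).

Definition in_simplex (x : 'I_m -> R) : Prop :=
  (forall j, 0 <= x j) /\ \sum_(j < m) x j = 1.

Definition is_profile (a : 'I_n -> 'I_m -> R) : Prop :=
  forall i, in_simplex (a i).

Definition cost (mu s0 : 'I_m -> R) (lam : 'I_n -> R)
    (a : 'I_n -> 'I_m -> R) (i : 'I_n) : R :=
  \sum_(j < m) lam i * a i j *
     (lam i * a i j / (2 * mu j)
      + (s0 j + \sum_(k < n | k != i) lam k * a k j) / mu j).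

Definition upd (a : 'I_n -> 'I_m -> R) (i : 'I_n) (x : 'I_m -> R)
    : 'I_n -> 'I_m -> R :=
  fun k => if k == i then x else a k.

Definition best_response mu s0 lam (a : 'I_n -> 'I_m -> R) (i : 'I_n)
    (x : 'I_m -> R) : Prop :=
  in_simplex x /\
  forall y, in_simplex y -> cost mu s0 lam (upd a i x) i <= cost mu s0 lam (upd a i y) i.

Definition pure_nash mu s0 lam (a : 'I_n -> 'I_m -> R) : Prop :=
  is_profile a /\
  forall i y, in_simplex y -> cost mu s0 lam a i <= cost mu s0 lam (upd a i y) i.

End LB.

(* Player [i]'s cost is a strictly convex quadratic in its own action whose
   partial derivative along server [j] is [lam i] times the resulting load of [j],
   so a best response is exactly an action supported on the least loaded servers.
   Along the dynamics, every player that has already moved is supported on the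
   least loaded servers, and every other player still uses all servers.  This
   persists when a new player moves: a least loaded server [j0] receiving mass
   from the new best response stays least loaded by optimality, and if [j0]
   receives none yet stopped being least loaded, every server would end up
   strictly less loaded than [j0] was before, i.e. the moving player would have
   withdrawn mass from every server. After all [n] moves every player is
   supported on the least loaded servers, which is a Nash equilibrium. *)

From mathcomp Require Import all_boot all_order all_algebra all_fingroup.
From mathcomp Require Import reals.
From mathcomp Require Import ring lra.
Set Implicit Arguments. Unset Strict Implicit. Unset Printing Implicit Defensive.
Import Order.TTheory GRing.Theory Num.Theory.
Local Open Scope ring_scope.

Section Simplex.
Variables (R : realType) (m : nat).
Implicit Types (G x y : 'I_m -> R).

Definition supported_on_argmin G x := forall j k, x j != 0 -> G j <= G k.

Lemma in_simplex_convex x y t : in_simplex x -> in_simplex y -> 0 <= t <= 1 ->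
  in_simplex (fun j => x j + t * (y j - x j)).
Proof.
move=> [x_ge0 x_sum1] [y_ge0 y_sum1] /andP[t_ge0 t_le1]; split.
  move=> j; have -> : x j + t * (y j - x j) = (1 - t) * x j + t * y j by ring.
  by apply: addr_ge0; apply: mulr_ge0; rewrite ?subr_ge0.
by rewrite big_split /= -mulr_sumr sumrB x_sum1 y_sum1 subrr mulr0 addr0.
Qed.

Lemma pairing_ge0_of_supported_on_argmin G x y :
  in_simplex x -> in_simplex y -> supported_on_argmin G x ->
  0 <= \sum_(j < m) G j * (y j - x j).
Proof.
move=> [x_ge0 x_sum1] [y_ge0 y_sum1] x_supp.
have -> : \sum_(j < m) G j * (y j - x j) =
          \sum_(j < m) \sum_(k < m) y j * x k * (G j - G k).
  transitivity (\sum_(j < m) \sum_(k < m) y j * x k * G j -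
                \sum_(j < m) \sum_(k < m) y j * x k * G k); last first.
    rewrite -sumrB; apply: eq_bigr => j _.
    by rewrite -sumrB; apply: eq_bigr => k _; rewrite mulrBr.
  have -> : \sum_(j < m) \sum_(k < m) y j * x k * G j = \sum_(j < m) G j * y j.
    by apply: eq_bigr => j _; rewrite -mulr_suml -mulr_sumr x_sum1; ring.
  rewrite exchange_big /=.
  have -> : \sum_(k < m) \sum_(j < m) y j * x k * G k = \sum_(k < m) G k * x k.
    by apply: eq_bigr => k _; rewrite -!mulr_suml y_sum1; ring.
  by rewrite -sumrB; apply: eq_bigr => j _; rewrite mulrBr.
apply: sumr_ge0 => j _; apply: sumr_ge0 => k _.
have [->|xk_neq0] := eqVneq (x k) 0; first by rewrite mulr0 mul0r.
by apply: mulr_ge0; [apply: mulr_ge0 | rewrite subr_ge0; apply: x_supp].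
Qed.

(* Moving all the mass of [x] from [j] to [k] changes the pairing by [x j * (G k - G j)]. *)
Lemma supported_on_argmin_of_pairing_ge0 G x : in_simplex x ->
  (forall y, in_simplex y -> 0 <= \sum_(j < m) G j * (y j - x j)) ->
  supported_on_argmin G x.
Proof.
move=> [x_ge0 x_sum1] x_pairing j k xj_neq0.
have [->|k_neq_j] := eqVneq k j; first exact: lexx.
have xj_gt0 : 0 < x j by rewrite lt0r xj_neq0 x_ge0.
pose d q : R := (q == k)%:R - (q == j)%:R.
have sum_d F : \sum_(q < m) F q * d q = F k - F j.
  have sum_delta i : \sum_(q < m) F q * (q == i)%:R = F i.
    rewrite (bigD1 i) //= eqxx mulr1 big1 ?addr0 // => q /negbTE ->.
    by rewrite mulr0.
  by under eq_bigr do rewrite mulrBr; rewrite sumrB !sum_delta.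
have y_simplex : in_simplex (fun q => x q + x j * d q).
  split.
    move=> q; rewrite /d; have [->|q_neq_k] := eqVneq q k.
      by rewrite (negbTE k_neq_j) subr0 mulr1; apply: addr_ge0.
    have [->|_] := eqVneq q j; last by rewrite subrr mulr0 addr0.
    by rewrite sub0r mulrN1 subrr.
  rewrite big_split /= x_sum1.
  have := sum_d (fun=> x j); rewrite -mulr_sumr subrr => ->.
  by rewrite addr0.
have := x_pairing _ y_simplex.
under eq_bigr do rewrite addrAC subrr add0r mulrCA.
by rewrite -mulr_sumr sum_d pmulr_rge0 // subr_ge0.
Qed.

End Simplex.

Lemma slope_ge0 (R : realFieldType) (L Q : R) : 0 <= Q ->
  (forall t, 0 < t <= 1 -> 0 <= t * L + t ^+ 2 * Q) -> 0 <= L.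
Proof.
move=> Q_ge0 tLQ_ge0; rewrite leNgt; apply/negP => L_lt0.
have QL_gt0 : 0 < Q - L by lra.
pose t := - L / (Q - L).
have t_gt0 : 0 < t by apply: divr_gt0; lra.
have t_le1 : t <= 1 by rewrite ler_pdivrMr // mul1r; lra.
have := tLQ_ge0 t; rewrite t_gt0 t_le1 => /(_ isT).
have -> : t * L + t ^+ 2 * Q = - t * L ^+ 2 / (Q - L).
  by rewrite /t; field; rewrite gt_eqF.
have : 0 < t * L ^+ 2 / (Q - L).
  by apply: divr_gt0 => //; apply: mulr_gt0; rewrite // exprn_even_gt0 //= lt_eqF.
rewrite !mulNr; lra.
Qed.

Section Game.
Variables (R : realType) (n m : nat) (mu s0 : 'I_m -> R) (lam : 'I_n -> R).
Hypothesis mu_gt0 : forall j, 0 < mu j.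
Hypothesis lam_gt0 : forall i, 0 < lam i.
Implicit Types (a b : 'I_n -> 'I_m -> R) (B x y : 'I_m -> R).

Definition others_load a i j := s0 j + \sum_(k < n | k != i) lam k * a k j.

Definition load a j := (s0 j + \sum_(k < n) lam k * a k j) / mu j.

Definition load_against i B x j := (lam i * x j + B j) / mu j.

Definition cost_against i B y :=
  \sum_(j < m) lam i * y j * (lam i * y j / (2 * mu j) + B j / mu j).

Definition on_least_loaded a i := supported_on_argmin (load a) (a i).

Lemma cost_upd a i y : cost mu s0 lam (upd a i y) i = cost_against i (others_load a i) y.
Proof.
rewrite /cost /cost_against; apply: eq_bigr => j _; rewrite /upd eqxx /others_load.
by congr (_ * (_ + (_ + _) / _)); apply: eq_bigr => k /negbTE ->.
Qed.

Lemma cost_against_others a i : cost mu s0 lam a i = cost_against i (others_load a i) (a i).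
Proof. by []. Qed.

Lemma load_against_others a i j : load a j = load_against i (others_load a i) (a i) j.
Proof. by rewrite /load /load_against /others_load (bigD1 i) //= addrCA. Qed.

Lemma others_load_eq a b i j : (forall k, k != i -> a k = b k) ->
  others_load a i j = others_load b i j.
Proof. by move=> eq_ab; congr (_ + _); apply: eq_bigr => k /eq_ab ->. Qed.

Lemma ltr_load_against i B x y j :
  (load_against i B x j < load_against i B y j) = (x j < y j).
Proof. by rewrite ltr_pM2r ?invr_gt0 // ltrD2r ltr_pM2l. Qed.

Lemma cost_against_sub i B x y :
  cost_against i B y - cost_against i B x =
  lam i * \sum_(j < m) load_against i B x j * (y j - x j)
  + \sum_(j < m) lam i ^+ 2 / (2 * mu j) * (y j - x j) ^+ 2.
Proof.
rewrite /cost_against -sumrB mulr_sumr -big_split; apply: eq_bigr => j _ /=.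
by rewrite /load_against; field; rewrite gt_eqF.
Qed.

Lemma cost_against_min i B x : in_simplex x ->
  supported_on_argmin (load_against i B x) x ->
  forall y, in_simplex y -> cost_against i B x <= cost_against i B y.
Proof.
move=> x_simplex x_supp y y_simplex.
rewrite -subr_ge0 cost_against_sub; apply: addr_ge0.
  by apply: mulr_ge0; [exact: ltW | exact: pairing_ge0_of_supported_on_argmin].
apply: sumr_ge0 => j _; apply: mulr_ge0; last exact: sqr_ge0.
by apply: divr_ge0; [exact: sqr_ge0 | apply: mulr_ge0; [lra | exact: ltW]].
Qed.

(* Minimality along the segment from [x] towards any [y] of the simplex forces a
   nonnegative slope at [x]. *)
Lemma supported_on_argmin_cost_against i B x : in_simplex x ->
  (forall y, in_simplex y -> cost_against i B x <= cost_against i B y) ->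
  supported_on_argmin (load_against i B x) x.
Proof.
move=> x_simplex x_min; apply: supported_on_argmin_of_pairing_ge0 => // y y_simplex.
rewrite -(pmulr_rge0 _ (lam_gt0 i)).
apply: (slope_ge0 (Q := \sum_(j < m) lam i ^+ 2 / (2 * mu j) * (y j - x j) ^+ 2)).
  apply: sumr_ge0 => j _; apply: mulr_ge0; last exact: sqr_ge0.
  by apply: divr_ge0; [exact: sqr_ge0 | apply: mulr_ge0; [lra | exact: ltW]].
move=> t t_range; pose z j := x j + t * (y j - x j).
have z_simplex : in_simplex z.
  by apply: in_simplex_convex => //; case/andP: t_range => /ltW -> ->.
have := x_min _ z_simplex; rewrite -subr_ge0 cost_against_sub.
have z_sub_x j : z j - x j = t * (y j - x j) by rewrite /z addrAC subrr add0r.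
under eq_bigr do rewrite z_sub_x mulrCA.
under [X in _ + X]eq_bigr do rewrite z_sub_x exprMn mulrCA.
by rewrite -!mulr_sumr mulrCA.
Qed.

Lemma least_load_preserved i B xo xn j0 :
  (forall j, 0 < xo j) -> \sum_(j < m) xn j = \sum_(j < m) xo j ->
  supported_on_argmin (load_against i B xn) xn ->
  (forall j, load_against i B xo j0 <= load_against i B xo j) ->
  forall j, load_against i B xn j0 <= load_against i B xn j.
Proof.
move=> xo_gt0 sum_eq xn_supp j0_min j.
have [xn_j0|] := eqVneq (xn j0) 0; last exact: xn_supp.
rewrite leNgt; apply/negP => j_lt_j0.
have xn_lt_xo q : xn q < xo q.
  have [->|xnq_neq0] := eqVneq (xn q) 0; first exact: xo_gt0.
  rewrite -(ltr_load_against i B); apply: (le_lt_trans (xn_supp q j xnq_neq0)).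
  apply: (lt_le_trans j_lt_j0); apply: le_trans (j0_min q).
  by rewrite ltW // ltr_load_against xn_j0.
have : \sum_(q < m) xn q < \sum_(q < m) xo q.
  by apply: ltr_sum => //; apply/hasP; exists j0 => //; exact: mem_index_enum.
by rewrite sum_eq ltxx.
Qed.

Section Move.
Variables (a b : 'I_n -> 'I_m -> R) (p : 'I_n).
Hypothesis b_other : forall i, i != p -> b i = a i.

Lemma load_move j : load b j = load_against p (others_load a p) (b p) j.
Proof. by rewrite (load_against_others _ p) /load_against (others_load_eq _ b_other). Qed.

Lemma best_response_on_least_loaded :
  best_response mu s0 lam a p (b p) -> on_least_loaded b p.
Proof.
move=> [bp_simplex bp_best] j k; rewrite !load_move; move: j k.
apply: supported_on_argmin_cost_against => // y.
by rewrite -!cost_upd; apply: bp_best.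
Qed.

Lemma on_least_loaded_move i : i != p ->
  in_simplex (a p) -> (forall j, 0 < a p j) -> in_simplex (b p) ->
  on_least_loaded b p -> on_least_loaded a i -> on_least_loaded b i.
Proof.
move=> i_neq_p [_ ap_sum1] ap_gt0 [_ bp_sum1] bp_min ai_min j k.
rewrite b_other // => aij_neq0; rewrite !load_move.
apply: (least_load_preserved (xo := a p)) => //; first by rewrite ap_sum1 bp_sum1.
  by move=> q q'; rewrite -!load_move; apply: bp_min.
by move=> q; rewrite -!load_against_others; apply: ai_min.
Qed.

End Move.

Lemma pure_nash_on_least_loaded a : is_profile a -> (forall i, on_least_loaded a i) ->
  pure_nash mu s0 lam a.
Proof.
move=> a_profile a_min; split => // i y y_simplex.
rewrite cost_against_others cost_upd; apply: cost_against_min => // j k.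
by rewrite -!load_against_others; apply: a_min.
Qed.

Section BestResponseDynamics.
Variables (a0 : 'I_n -> 'I_m -> R) (sigma : 'S_n) (P : nat -> 'I_n -> 'I_m -> R).
Hypothesis a0_profile : is_profile a0.
Hypothesis a0_neq0 : forall i j, a0 i j != 0.
Hypothesis P0 : P 0%N = a0.
Hypothesis P_step : forall k : 'I_n,
  best_response mu s0 lam (P k) (sigma k) (P k.+1 (sigma k)) /\
  (forall i, i != sigma k -> P k.+1 i = P k i).

Lemma best_response_dynamics_invariant k : (k <= n)%N -> forall i,
  in_simplex (P k i) /\
  (if ((sigma^-1)%g i < k)%N then on_least_loaded (P k) i else P k i = a0 i).
Proof.
elim: k => [_ i|k IH k_lt_n]; first by rewrite P0 ltn0; split; first exact: a0_profile.
have {}IH := IH (ltnW k_lt_n).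
pose ko := Ordinal k_lt_n; pose p := sigma ko.
have [Pp_br P_other] : best_response mu s0 lam (P k) p (P k.+1 p) /\
    (forall i, i != p -> P k.+1 i = P k i) := P_step ko.
have [Pp_simplex _] := Pp_br.
have Pp_min := best_response_on_least_loaded P_other Pp_br.
have p_rank : (sigma^-1)%g p = ko by rewrite permK.
have [Pkp_simplex] := IH p; rewrite p_rank ltnn => Pkp_a0.
move=> i; have [->|i_neq_p] := eqVneq i p.
  by rewrite p_rank /= ltnSn.
have i_rank : (nat_of_ord ((sigma^-1)%g i) != k).
  by rewrite -[k]/(nat_of_ord ko) val_eqE -p_rank (inj_eq perm_inj).
have [Pki_simplex Pki] := IH i.
have -> : ((sigma^-1)%g i < k.+1)%N = ((sigma^-1)%g i < k)%N.
  by rewrite ltnS leq_eqVlt (negbTE i_rank).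
rewrite P_other //; split => //; case: ifP Pki => // _ Pki_min.
apply: (on_least_loaded_move P_other) => //; rewrite Pkp_a0.
by move=> j; rewrite lt0r a0_neq0; case: (a0_profile p) => ->.
Qed.

End BestResponseDynamics.

End Game.

Theorem theorem2 (R : realType) (n m : nat)
    (mu s0 : 'I_m -> R) (lam : 'I_n -> R)
    (a0 : 'I_n -> 'I_m -> R) (sigma : 'S_n)
    (P : nat -> 'I_n -> 'I_m -> R) :
  (forall j, 0 < mu j) ->
  (forall j, 0 <= s0 j) ->
  (forall i, 0 < lam i) ->
  is_profile a0 ->
  (forall i j, a0 i j != 0) ->
  P 0%N = a0 ->
  (forall k : 'I_n,
     best_response mu s0 lam (P k) (sigma k) (P k.+1 (sigma k)) /\
     (forall i, i != sigma k -> P k.+1 i = P k i)) ->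
  pure_nash mu s0 lam (P n).
Proof.
move=> mu_gt0 _ lam_gt0 a0_profile a0_neq0 P0 P_step.
have invariant := best_response_dynamics_invariant mu_gt0 lam_gt0 a0_profile a0_neq0
  P0 P_step (leqnn n).
apply: pure_nash_on_least_loaded => // i; first by case: (invariant i).
by have [_] := invariant i; rewrite ltn_ord.
Qed.
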